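(* Let $\langle X\mid R\rangle$ be a side-confluent $N$-homogeneous presentation with $X$ a finite totally ordered set, and let $n\geq0$. Let $h'_n:\bigoplus_{m\geq l_N(n)}V^{\otimes m}\to T(V)$ be the linear map whose restriction to $V^{\otimes m}$ is the left bound $\varphi^{P_{n,m}}(\gamma_1)$ of $P_{n,m}$. Then the image of $h'_n$ is included in $\mathrm{im}(\phi)\otimes J_{n+1}$.
   Context: $\mathbb{K}$ is a field, $N\geq2$, $X^{(m)}$ words of length $m$, $V=\mathbb{K}X$, $V^{\otimes m}=\mathbb{K}X^{(m)}$, $T(V)$ the free algebra (tensor products of subspaces of $T(V)$ are viewed in $T(V)$ via concatenation). $R\subset V^{\otimes N}$, $\overline R=\mathrm{span}(R)$, $I(R)_j=0$ ($j<N$), $I(R)_j=\sum_{i=0}^{j-N}V^{\otimes i}\otimes\overline R\otimes V^{\otimes j-N-i}$ ($j\geq N$). $X^{(m)}$ lexicographically ordered, $\mathrm{lm}(f)$ greatest word in $f\neq0$. Conventions: leading coefficients in $R$ are $1$; a word is a normal form if it has no factor $\mathrm{lm}(f)$, $f\in R$, an element is a normal form if it is a combination of such words; the presentation is reduced. $S(\mathrm{lm}(f))=\mathrm{lm}(f)-f$ ($f\in R$), $S(w)=w$ otherwise; $\langle t,s\rangle^k=\cdots sts$ ($k$ factors, rightmost $s$); side-confluent: for each $1\leq m\leq N-1$ some $k$ gives $\langle\mathrm{id}_{V^{\otimes m}}\otimes S,S\otimes\mathrm{id}_{V^{\otimes m}}\rangle^k=\langle S\otimes\mathrm{id}_{V^{\otimes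 m}},\mathrm{id}_{V^{\otimes m}}\otimes S\rangle^k$. Then every $f$ has a unique normal form $\widehat f$ reachable by reductions; $\phi:T(V)\to T(V)$, $f\mapsto\widehat f$. $l_N(2k)=kN$, $l_N(2k+1)=kN+1$; $J_1=V$, $J_2=\overline R$, $J_n=\bigcap_{i=0}^{l_N(n)-N}V^{\otimes i}\otimes\overline R\otimes V^{\otimes l_N(n)-N-i}$ ($n\geq3$). A reduction operator relatively to $X^{(m)}$ is a linear projector $T$ of $V^{\otimes m}$ with each $T(w)$ equal to $w$ or a combination of words $<w$; the unique one with kernel $W$ is $\theta_{X^{(m)}}^{-1}(W)$. For $m\geq l_N(n)$: $F_1^{n,m}=\theta_{X^{(m)}}^{-1}(I(R)_{m-l_N(n)}\otimes V^{\otimes l_N(n)})$, $F_2^{n,m}=\mathrm{id}$ if $m<l_N(n+1)$, else $\theta_{X^{(m)}}^{-1}(V^{\otimes m-l_N(n+1)}\otimes J_{n+1})$; $P_{n,m}=(F_1^{n,m},F_2^{n,m})$, which is confluent under the hypotheses; fix $k$ with $\langle F_1^{n,m},F_2^{n,m}\rangle^k=\langle F_2^{n,m},F_1^{n,m}\rangle^k$. $\mathcal{A}_k$ is the algebra on $s_1,s_2$ with relations $s_i^2=s_i$, $\langle s_1,s_2\rangle^k=\langle s_2,s_1\rangle^k$; $\gamma_1=(1-s_2)\sum_{i\in I}\langle s_2,s_1\rangle^i$ with $I$ the odd integers in $[1,k-1]$; $\varphi^{P_{n,m}}:\mathcal{A}_k\to\mathrm{End}(V^{\otimes m})$, $s_i\mapsto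 F_i^{n,m}$. *)

From HB Require Import structures.
From mathcomp Require Import all_boot all_order all_algebra.
Set Implicit Arguments. Unset Strict Implicit. Unset Printing Implicit Defensive.
Import Order.TTheory GRing.Theory.
Local Open Scope ring_scope.

Section Presentation.
Variables (K : fieldType) (disp : Order.disp_t) (X : finOrderType disp).

(* V^{(x) m} = K X^{(m)}: functions on words of length m (finite support). *)
Definition tn (m : nat) := {ffun m.-tuple X -> K^o}.

(* Coefficient of an element of V^{(x) m} on an arbitrary word (0 if the
   length is not m). *)
Definition coef m (f : tn m) (s : seq X) : K :=
  if (insub s : option (m.-tuple X)) is Some t then f t else 0.

(* the basis word s seen in V^{(x) m} (0 if size s <> m) *)
Definition ew m (s : seq X) : tn m := [ffun t : m.-tuple X => (val t == s)%:R].

(* concatenation product f (x) g of f in V^{(x) a}, g in V^{(x) b}, placed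
   in degree j (it is 0 unless j = a + b). *)
Definition tens j a b (f : tn a) (g : tn b) : tn j :=
  [ffun w : j.-tuple X => coef f (take a w) * coef g (drop a w)].

Definition retype j a (f : tn a) : tn j := [ffun w : j.-tuple X => coef f w].

Fixpoint lexlt (s t : seq X) : bool :=
  match s, t with
  | x :: s', y :: t' => (x < y)%O || ((x == y) && lexlt s' t')
  | _, _ => false
  end.

Definition is_lmb m (f : tn m) (w : m.-tuple X) : bool :=
  (f w != 0) && [forall u, (f u != 0) ==> (u == w) || lexlt u w].

Definition lm m (f : tn m) : option (m.-tuple X) := [pick w | is_lmb f w].

Variables (N : nat) (R : seq (tn N)).

Definition lc_one : Prop := forall f, f \in R -> exists w, is_lmb f w /\ f w = 1.

Definition normal_word (w : seq X) : Prop :=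
  forall f p u v, f \in R -> lm f = Some p -> w <> u ++ val p ++ v.

Definition normal_form m (g : tn m) : Prop :=
  forall w : m.-tuple X, g w != 0 -> normal_word w.

Definition reduced : Prop :=
  (forall f g, f \in R -> g \in R -> lm f = lm g -> f = g) /\
  (forall f, f \in R -> forall w : N.-tuple X, f w != 0 -> lm f <> Some w ->
     normal_word w).

Definition Sw (w : N.-tuple X) : tn N :=
  let i := find (fun f => lm f == Some w) R in
  if (i < size R)%N then ew N w - nth 0 R i else ew N w.

Definition Sop (x : tn N) : tn N := \sum_(w : N.-tuple X) x w *: Sw w.

(* id_{V^{(x) m}} (x) T and T (x) id_{V^{(x) m}}, as operators on V^{(x) j}
   (used with j = N + m) *)
Definition idT j m (T : tn N -> tn N) (x : tn j) : tn j :=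
  \sum_(w : j.-tuple X) x w *: tens j (ew m (take m w)) (T (ew N (drop m w))).

Definition Tid j m (T : tn N -> tn N) (x : tn j) : tn j :=
  \sum_(w : j.-tuple X) x w *: tens j (T (ew N (take N w))) (ew m (drop N w)).

(* <t, s>^k = ... s t s  (k factors, rightmost s) *)
Fixpoint alt j (k : nat) (t s : tn j -> tn j) : tn j -> tn j :=
  match k with
  | 0 => id
  | k'.+1 => alt k' s t \o s
  end.

Definition side_confluent : Prop :=
  forall m, (1 <= m <= N.-1)%N ->
    exists k, forall x : tn (N + m),
      alt k (idT m Sop) (Tid m Sop) x =
      alt k (Tid m Sop) (idT m Sop) x.

(* one reduction step in V^{(x) m}: replace the word u lm(g) v by u S(lm g) v *)
Definition red_step m (f f' : tn m) : Prop :=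
  exists g p u v,
    [/\ g \in R, lm g = Some p, coef f (u ++ val p ++ v) != 0 &
        f' = f - coef f (u ++ val p ++ v) *:
                 tens m (tens (size u + N) (ew (size u) u) g) (ew (size v) v)].

Inductive reach m : tn m -> tn m -> Prop :=
  | reach_refl f : reach f f
  | reach_step f f' f'' : red_step f f' -> reach f' f'' -> reach f f''.

(* degree-m part of im(phi): normal forms reachable from some element *)
Definition imphi m (g : tn m) : Prop := exists f, reach f g /\ normal_form g.

Definition tensv j a b (A : {vspace tn a}) (B : {vspace tn b}) : {vspace tn j} :=
  << [seq tens j x y | x <- vbasis A, y <- vbasis B] >>%VS.

Definition Rbar : {vspace tn N} := << R >>%VS.

Definition IR j : {vspace tn j} :=
  if (j < N)%N then 0%VS else
  (\sum_(i < (j - N).+1)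
      tensv j (tensv (i + N) (fullv : {vspace tn i}) Rbar)
              (fullv : {vspace tn (j - N - i)}))%VS.

Definition lN (n : nat) : nat := if odd n then (n./2 * N + 1)%N else (n./2 * N)%N.

Definition J (n : nat) : {vspace tn (lN n)} :=
  if n == 1%N then fullv
  else if n == 2%N then << [seq retype (lN n) r | r <- R] >>%VS
  else (\bigcap_(i < (lN n - N).+1)
          tensv (lN n) (tensv (i + N) (fullv : {vspace tn i}) Rbar)
                       (fullv : {vspace tn (lN n - N - i)}))%VS.

Definition lin m (T : tn m -> tn m) : Prop :=
  forall (a : K) (x y : tn m), T (a *: x + y) = a *: T x + T y.

Definition redop m (T : tn m -> tn m) : Prop :=
  [/\ lin T, forall x, T (T x) = T x &
      forall w : m.-tuple X, T (ew m w) = ew m w \/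
        forall u : m.-tuple X, T (ew m w) u != 0 -> lexlt u w].

Definition theta_inv m (W : {vspace tn m}) (T : tn m -> tn m) : Prop :=
  redop T /\ forall x, T x = 0 <-> x \in W.

(* varphi^{P}(gamma_1) = (1 - F2) sum_{i odd, 1 <= i <= k-1} <F2, F1>^i *)
Definition left_bound m (k : nat) (F1 F2 : tn m -> tn m) (x : tn m) : tn m :=
  let y := \sum_(i < k | odd i) alt i F2 F1 x in y - F2 y.

Definition in_imphi_J (n m : nat) (z : tn m) : Prop :=
  exists s : seq (tn (m - lN n.+1) * tn (lN n.+1)),
    (forall p, p \in s -> imphi p.1 /\ p.2 \in J n.+1) /\
    z = \sum_(p <- s) tens m p.1 p.2.

End Presentation.

(* The left bound is L = y - F2 y, where y is a sum of terms <F2, F1>^i with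
   i odd, each of which ends with F1.  A reduction operator only produces words
   that it fixes, and a word fixed by F1 has a normal prefix of length
   m - l_N(n): otherwise it is the leading word of an element u f v b of
   ker F1 = I(R) (x) V^{(x) l_N(n)}, which F1 cannot kill.  Since
   ker F2 = V^{(x) A} (x) J_{n+1} with A = m - l_N(n+1) <= m - l_N(n), F2 never
   changes the prefix of length A of a word, so every word in the support of L
   has a normal prefix of length A.  Finally F2 L = 0 by idempotence, so
   L lies in V^{(x) A} (x) J_{n+1}, and splitting L along its prefixes writes it
   as a sum of (normal word) (x) (element of J_{n+1}). *)

From HB Require Import structures.
From mathcomp Require Import all_boot all_order all_algebra.
From mathcomp Require Import zify.
Set Implicit Arguments. Unset Strict Implicit. Unset Printing Implicit Defensive.
Import Order.TTheory GRing.Theory.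
Local Open Scope ring_scope.

Section Words.
Variables (K : fieldType) (disp : Order.disp_t) (X : finOrderType disp).
Local Notation tn := (tn K X).
Local Notation ew := (ew K).

Lemma coef_tuple m (f : tn m) (t : m.-tuple X) : coef f t = f t.
Proof. by rewrite /coef; case: insubP => [u _ /val_inj -> // |]; rewrite size_tuple eqxx. Qed.

Lemma coef_size m (f : tn m) s : coef f s != 0 -> size s = m.
Proof. by rewrite /coef; case: insubP => [t /eqP -> //|]; rewrite eqxx. Qed.

Lemma coefD m (a : K) (f g : tn m) s : coef (a *: f + g) s = a * coef f s + coef g s.
Proof. by rewrite /coef; case: insubP => [t _ _|_]; rewrite ?ffunE ?mulr0 ?addr0. Qed.

Lemma coef_ew m (s0 s : seq X) : size s0 = m -> coef (ew m s0) s = (s == s0)%:R.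
Proof.
move=> hs; rewrite /coef; case: insubP => [t _ <- | ]; first by rewrite ffunE.
by case: (s =P s0) => // -> /negP[]; rewrite hs.
Qed.

Lemma coef_ew_neq0 m (s0 s : seq X) : size s0 = m -> coef (ew m s0) s != 0 -> s = s0.
Proof. by move=> hs; rewrite coef_ew //; case: (s =P s0) => // _; rewrite mulr0n eqxx. Qed.

Lemma coef_tens j a b (f : tn a) (g : tn b) s :
  coef (tens j f g) s = if size s == j then coef f (take a s) * coef g (drop a s) else 0.
Proof.
rewrite /coef; case: insubP => [t _ <-|]; first by rewrite ffunE size_tuple eqxx.
by move/negbTE=> ->.
Qed.

Lemma coef_tens_neq0 j a b (f : tn a) (g : tn b) s : coef (tens j f g) s != 0 ->
  coef f (take a s) != 0 /\ coef g (drop a s) != 0.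
Proof.
rewrite coef_tens; case: ifP => _; last by rewrite eqxx.
by rewrite mulf_eq0 negb_or => /andP[].
Qed.

Lemma ew_decomp m (x : tn m) : x = \sum_(w : m.-tuple X) x w *: ew m w.
Proof.
apply/ffunP => t; rewrite sum_ffunE (bigD1 t) //= !ffunE eqxx big1 ?addr0.
  by rewrite [_ *: _]mulr1.
move=> w wt; rewrite !ffunE; case: eqP => [/val_inj E|_]; last exact: mulr0.
by rewrite E eqxx in wt.
Qed.

Definition linmap a b (f : tn a -> tn b) :=
  forall (c : K) x y, f (c *: x + y) = c *: f x + f y.

Section Linear.
Variables (a b : nat) (f : tn a -> tn b).
Hypothesis f_lin : linmap f.

Lemma linmap0 : f 0 = 0.
Proof. by apply/(addrI (f 0)); rewrite addr0 -{1}[f 0]scale1r -f_lin scale1r addr0. Qed.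

Lemma linmap_sum I (r : seq I) (P : pred I) (c : I -> K) v :
  f (\sum_(i <- r | P i) c i *: v i) = \sum_(i <- r | P i) c i *: f (v i).
Proof. by elim/big_rec2: _ => [|i y x _ <-]; [exact: linmap0 | rewrite f_lin]. Qed.

Lemma linmapB x y : f (x - y) = f x - f y.
Proof. by rewrite addrC -scaleN1r f_lin scaleN1r addrC. Qed.

Lemma linmapN x : f (- x) = - f x.
Proof. by rewrite -sub0r linmapB linmap0 sub0r. Qed.

End Linear.

Lemma tens_linl j a b (y : tn b) : linmap (fun x : tn a => tens j x y).
Proof. by move=> c x1 x2; apply/ffunP => w; rewrite !ffunE coefD mulrDl -mulrA. Qed.

Lemma tens_linr j a b (x : tn a) : linmap (fun y : tn b => tens j x y).
Proof. by move=> c y1 y2; apply/ffunP => w; rewrite !ffunE coefD mulrDr mulrCA. Qed.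

Definition supp_in m (P : m.-tuple X -> Prop) (z : tn m) := forall u, z u != 0 -> P u.

Section Support.
Variables (m : nat) (P : m.-tuple X -> Prop).

Lemma supp_inD (y z : tn m) : supp_in P y -> supp_in P z -> supp_in P (y + z).
Proof.
move=> hy hz u; rewrite ffunE.
by case: (eqVneq (y u) 0) => [->|/hy //]; rewrite add0r => /hz.
Qed.

Lemma supp_inZ (c : K) (z : tn m) : (c != 0 -> supp_in P z) -> supp_in P (c *: z).
Proof.
by move=> hz u; rewrite ffunE mulf_eq0 negb_or => /andP[/hz]; apply.
Qed.

Lemma supp_inB (y z : tn m) : supp_in P y -> supp_in P z -> supp_in P (y - z).
Proof.
by move=> hy hz; rewrite -scaleN1r; apply: supp_inD hy (supp_inZ (fun _ => hz)).
Qed.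

Lemma supp_in_sum I (r : seq I) (Q : pred I) (F : I -> tn m) :
  (forall i, Q i -> supp_in P (F i)) -> supp_in P (\sum_(i <- r | Q i) F i).
Proof.
move=> hF; apply: (big_ind (supp_in P)) => //; last exact: supp_inD.
by move=> u; rewrite ffunE eqxx.
Qed.

Lemma supp_in_linmap (f : tn m -> tn m) (z : tn m) : linmap f ->
  (forall w, z w != 0 -> supp_in P (f (ew m w))) -> supp_in P (f z).
Proof.
move=> hf hz; rewrite (ew_decomp z) linmap_sum //.
by apply: supp_in_sum => w _; apply: supp_inZ; apply: hz.
Qed.

End Support.
Lemma lexlt_irr (s : seq X) : lexlt s s = false.
Proof. by elim: s => //= x s ->; rewrite ltxx eqxx. Qed.

Lemma lexlt_trans (s t u : seq X) : lexlt s t -> lexlt t u -> lexlt s u.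
Proof.
elim: s t u => [|x s IH] [|y t] [|z u] //=.
case/orP=> [xy|/andP[/eqP <- st]]; case/orP=> [yz|/andP[/eqP <- tu]].
- by rewrite (lt_trans xy yz).
- by rewrite xy.
- by rewrite yz.
- by rewrite eqxx (IH _ _ st tu) orbT.
Qed.

Lemma lexlt_catl (u s t : seq X) : lexlt (u ++ s) (u ++ t) = lexlt s t.
Proof. by elim: u => //= x u ->; rewrite ltxx eqxx. Qed.

Lemma lexlt_catr (s t a b : seq X) : lexlt s t -> lexlt (s ++ a) (t ++ b).
Proof.
elim: s t => [|x s IH] [|y t] //=.
by case/orP=> [->//|/andP[-> /IH ->]]; rewrite orbT.
Qed.


Section ReductionOperator.
Variables (m : nat) (T : tn m -> tn m).
Hypothesis T_red : redop T.

Definition fixed_word (u : m.-tuple X) := T (ew m u) = ew m u.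

Lemma redop_linmap : linmap T.
Proof. by case: T_red. Qed.

Lemma redop_idem x : T (T x) = T x.
Proof. by case: T_red. Qed.

Lemma redop_ew_supp (w : m.-tuple X) : supp_in fixed_word (T (ew m w)).
Proof.
have [_ _ T_tri] := T_red.
pose rank (v : m.-tuple X) := #|[pred u : m.-tuple X | lexlt u v]|.
have [n] := ubnP (rank w); elim: n w => // n IH w /ltnSE rank_w.
have [Tw|T_lt] := T_tri w.
  rewrite Tw => u; rewrite ffunE; case: (val u =P val w) => [/val_inj -> _|_] //.
  by rewrite eqxx.
rewrite -redop_idem; refine (supp_in_linmap redop_linmap _) => v /T_lt v_lt_w.
apply: IH; apply: leq_trans rank_w; apply: proper_card; apply/properP; split.
  by apply/subsetP => u; rewrite !inE => /lexlt_trans; apply.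
by exists v; rewrite !inE ?lexlt_irr.
Qed.

Lemma redop_supp x : supp_in fixed_word (T x).
Proof. exact (supp_in_linmap redop_linmap (fun w _ => @redop_ew_supp w)). Qed.

Lemma redop_fixed x : supp_in fixed_word x -> T x = x.
Proof.
move=> hx; rewrite {1}(ew_decomp x) (linmap_sum redop_linmap) [RHS]ew_decomp.
by apply: eq_bigr => u _; case: (eqVneq (x u) 0) => [->|/hx ->]; rewrite ?scale0r.
Qed.

(* The words of e other than w only contribute to words strictly below w. *)
Lemma redop_lead_neq0 (e : tn m) (w : m.-tuple X) : fixed_word w -> e w != 0 ->
  (forall w', e w' != 0 -> w' = w \/ lexlt w' w) -> T e != 0.
Proof.
move=> hw hew hsupp; have [_ _ T_tri] := T_red.
apply/eqP => /ffunP /(_ w).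
rewrite {1}(ew_decomp e) (linmap_sum redop_linmap) sum_ffunE (bigD1 w) //=.
rewrite big1 ?addr0 => [|w' hw'].
  by rewrite ffunE hw !ffunE eqxx [_ *: _]mulr1 => E; rewrite E eqxx in hew.
rewrite ffunE; case: (eqVneq (e w') 0) => [->|/hsupp [E|Hlt]].
- by rewrite scale0r.
- by rewrite E eqxx in hw'.
have [->|Hs] := T_tri w'.
  rewrite ffunE; case: (val w =P val w') => [/val_inj E|_]; last exact: mulr0.
  by rewrite E eqxx in hw'.
case: (eqVneq (T (ew m w') w) 0) => [->|/Hs Hlt2]; first exact: mulr0.
by have := lexlt_trans Hlt Hlt2; rewrite lexlt_irr.
Qed.

End ReductionOperator.

Lemma tens_mem j a b (U : {vspace tn a}) (V : {vspace tn b}) x y :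
  x \in U -> y \in V -> tens j x y \in tensv j U V.
Proof.
move=> xU yV; rewrite (coord_vbasis yV) (linmap_sum (tens_linr j x)).
apply: memv_suml => i _; apply: memvZ.
rewrite (coord_vbasis xU) (linmap_sum (tens_linl j _)).
apply: memv_suml => i' _; apply: memvZ; apply: memv_span; apply/allpairsP.
by exists ((vbasis U)`_i', (vbasis V)`_i); split => //; apply: mem_nth; rewrite size_tuple.
Qed.

Definition slice B m (z : tn m) (a : seq X) : tn B :=
  [ffun c : B.-tuple X => coef z (a ++ c)].

Section Slices.
Variables (A B m : nat).
Hypothesis AB_m : (A + B = m)%N.

Lemma slice_linmap (a : seq X) : linmap (fun z : tn m => slice B z a).
Proof. by move=> c x y; apply/ffunP => w; rewrite !ffunE coefD. Qed.

Lemma slice_tens (x : tn A) (y : tn B) (a : seq X) : size a = A ->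
  slice B (tens m x y) a = coef x a *: y.
Proof.
move=> ha; apply/ffunP => c; rewrite !ffunE coef_tens size_cat size_tuple ha AB_m eqxx.
by rewrite take_size_cat // drop_size_cat // coef_tuple.
Qed.

Lemma slice_mem (U : {vspace tn A}) (V : {vspace tn B}) (z : tn m) (a : seq X) :
  size a = A -> z \in tensv m U V -> slice B z a \in V.
Proof.
pose s := [seq tens m x y | x <- vbasis U, y <- vbasis V].
move=> ha z_in; have {}z_in : z \in <<in_tuple s>>%VS by [].
rewrite (coord_span z_in) (linmap_sum (slice_linmap a)).
apply: memv_suml => i _; apply: memvZ.
have : s`_i \in s by apply: mem_nth; rewrite -[X in (_ < X)%N](size_tuple (in_tuple s)).
case/allpairsP => [[x y] [_ /= yV ->]].
by rewrite slice_tens // memvZ // vbasis_mem.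
Qed.

Lemma tens_slice_decomp (z : tn m) :
  z = \sum_(a : A.-tuple X) tens m (ew A a) (slice B z a).
Proof.
apply/ffunP => w; rewrite sum_ffunE.
have hs : size (take A w) == A by rewrite size_takel // size_tuple -AB_m leq_addr.
rewrite (bigD1 (Tuple hs)) //= big1 ?addr0 => [|a ha].
  rewrite ffunE (coef_ew _ (eqP hs)) eqxx mul1r.
  have hd : size (drop A w) == B by rewrite size_drop size_tuple -AB_m addKn.
  by rewrite (_ : drop A w = Tuple hd) // coef_tuple ffunE /= cat_take_drop coef_tuple.
rewrite ffunE coef_ew ?size_tuple //; case: eqP => [E|]; last by rewrite mul0r.
by case/eqP: ha; apply: val_inj; rewrite /= E.
Qed.

Lemma mem_tensv_full (V : {vspace tn B}) (z : tn m) :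
  (forall a : A.-tuple X, slice B z a \in V) -> z \in tensv m (fullv : {vspace tn A}) V.
Proof.
move=> hz; rewrite (tens_slice_decomp z); apply: memv_suml => a _.
exact: tens_mem (memvf _) (hz a).
Qed.

Lemma slice_neq0 (z : tn m) (a : A.-tuple X) : slice B z a != 0 ->
  exists2 u : m.-tuple X, take A u = a & z u != 0.
Proof.
move=> /eqP za; have [c zac] : exists c : B.-tuple X, coef z (a ++ c) != 0.
  apply/existsP; rewrite -negb_forall; apply/negP => /forallP zac0; apply: za.
  by apply/ffunP => c; rewrite !ffunE; apply/eqP/zac0.
have hs : size (a ++ c) == m by rewrite (coef_size zac).
by exists (Tuple hs); rewrite ?take_size_cat ?size_tuple // -coef_tuple.
Qed.

Definition restrict (z : tn m) (P : pred (seq X)) : tn m :=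
  [ffun w : m.-tuple X => if P (take A w) then z w else 0].

Lemma coef_restrict (z : tn m) P s :
  coef (restrict z P) s = if P (take A s) then coef z s else 0.
Proof. by rewrite /coef; case: insubP => [t _ <-|_]; rewrite ?ffunE //; case: (P _). Qed.

Lemma restrict_mem (V : {vspace tn B}) (z : tn m) P :
  z \in tensv m (fullv : {vspace tn A}) V ->
  restrict z P \in tensv m (fullv : {vspace tn A}) V.
Proof.
move=> z_in; apply: mem_tensv_full => a.
have -> : slice B (restrict z P) a = if P a then slice B z a else 0.
  apply/ffunP => c; rewrite !ffunE coef_restrict take_size_cat ?size_tuple //.
  by case: (P a); rewrite ?ffunE.
by case: (P a); [exact: slice_mem (size_tuple a) z_in | exact: mem0v].
Qed.

Section FullTensorKernel.
Variables (V : {vspace tn B}) (T : tn m -> tn m).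
Hypothesis T_theta : theta_inv (tensv m (fullv : {vspace tn A}) V) T.

(* T (w) - w lies in the kernel V^{(x) A} (x) V, and so does its part outside
   the prefix of w; that part is fixed by T, hence zero. *)
Lemma theta_inv_full_take (w u : m.-tuple X) :
  T (ew m w) u != 0 -> take A u = take A w.
Proof.
have [T_red T_ker] := T_theta; set g := T (ew m w) => gu.
pose P a := a != take A w.
have g_fixed : T (restrict g P) = restrict g P.
  apply: redop_fixed => // v; rewrite ffunE; case: ifP => _; last by rewrite eqxx.
  exact: redop_ew_supp.
have : T (restrict (ew m w - g) P) = 0.
  by apply/T_ker/restrict_mem/T_ker; rewrite (linmapB (redop_linmap T_red)) redop_idem ?subrr.
have -> : restrict (ew m w - g) P = - restrict g P.
  apply/ffunP => v; rewrite !ffunE; case: ifP => [Pv|_]; last by rewrite oppr0.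
  case: (val v =P val w) => [E|_]; last by rewrite sub0r.
  by move: Pv; rewrite /P E eqxx.
rewrite (linmapN (redop_linmap T_red)) g_fixed => /eqP; rewrite oppr_eq0.
move=> /eqP /ffunP /(_ u).
by rewrite !ffunE; case: ifP => [_ gu0|/negbFE/eqP //]; rewrite gu0 eqxx in gu.
Qed.

Lemma theta_inv_full_prefix_supp (Q : seq X -> Prop) (z : tn m) :
  supp_in (fun u => Q (take A u)) z -> supp_in (fun u => Q (take A u)) (T z).
Proof.
move=> z_supp; apply: (supp_in_linmap (redop_linmap T_theta.1)) => w zw u Tu.
rewrite (theta_inv_full_take Tu); exact: z_supp zw.
Qed.

End FullTensorKernel.

End Slices.

Lemma altS j k (t s : tn j -> tn j) x :
  alt k.+1 t s x = (if odd k then t else s) (alt k t s x).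
Proof.
elim: k t s x => [//|k IH] t s x.
change (alt k.+1 s t (s x) = (if odd k.+1 then t else s) (alt k s t (s x))).
by rewrite IH /=; case: (odd k).
Qed.

(* For i odd, <F2, F1>^i ends with F1. *)
Lemma left_bound_supp m k (F1 F2 : tn m -> tn m) (P : m.-tuple X -> Prop) x :
  (forall z, supp_in P (F1 z)) -> (forall z, supp_in P z -> supp_in P (F2 z)) ->
  supp_in P (left_bound k F1 F2 x).
Proof.
move=> F1_supp F2_supp; rewrite /left_bound.
have y_supp : supp_in P (\sum_(i < k | odd i) alt i F2 F1 x).
  apply: supp_in_sum => -[[|i] ?] // i_odd.
  by rewrite altS; move: i_odd => /= /negbTE ->.
exact: supp_inB y_supp (F2_supp _ y_supp).
Qed.

Section Presentation.
Variables (N : nat) (R : seq (tn N)).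

Lemma lmb_uniq (f : tn N) p q : is_lmb f p -> is_lmb f q -> p = q.
Proof.
move=> /andP[fp /forallP p_max] /andP[fq /forallP q_max].
have := implyP (p_max q) fq; have := implyP (q_max p) fp.
case/orP => [/eqP -> //|l1]; case/orP => [/eqP -> //|l2].
by have := lexlt_trans l1 l2; rewrite lexlt_irr.
Qed.

Lemma lm_lmb (f : tn N) p : lm f = Some p -> is_lmb f p.
Proof. by rewrite /lm; case: pickP => // q hq [<-]. Qed.

Lemma normal_word_take s k : normal_word R s -> normal_word R (take k s).
Proof.
move=> s_nf f p u v f_in lm_f E; apply: (s_nf f p u (v ++ drop k s) f_in lm_f).
by rewrite -{1}(cat_take_drop k s) E -!catA.
Qed.

Definition sandwich j (u : seq X) (f : tn N) (v : seq X) : tn j :=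
  tens j (tens (size u + N) (ew (size u) u) f) (ew (j - N - size u) v).

Lemma sandwich_mem_IR j u f v : f \in R -> (size u + N + size v)%N = j ->
  sandwich j u f v \in IR R j.
Proof.
move=> f_in j_eq; have u_lt : (size u < (j - N).+1)%N by rewrite -j_eq; lia.
have -> : IR R j = (\sum_(i < (j - N).+1)
      tensv j (tensv (i + N) (fullv : {vspace tn i}) (Rbar R))
              (fullv : {vspace tn (j - N - i)}))%VS.
  by rewrite /IR ifN // -leqNgt; lia.
apply: (subvP (sumv_sup (Ordinal u_lt) (erefl true) (subvv _))).
apply: tens_mem (memvf _); apply: tens_mem (memvf _) _; exact: memv_span.
Qed.

Lemma coef_sandwich j u f v s : size s = N -> (size u + N + size v)%N = j ->
  coef (sandwich j u f v) (u ++ s ++ v) = coef f s.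
Proof.
move=> s_N j_eq; have uv : size v = (j - N - size u)%N by rewrite -j_eq; lia.
have us : size (u ++ s) = (size u + N)%N by rewrite size_cat s_N.
rewrite coef_tens catA size_cat us j_eq eqxx take_size_cat // drop_size_cat //.
rewrite coef_ew // eqxx mulr1 coef_tens us eqxx take_size_cat // drop_size_cat //.
by rewrite coef_ew // eqxx mul1r.
Qed.

Lemma coef_sandwich_neq0 j u f v s : size v = (j - N - size u)%N ->
  coef (sandwich j u f v) s != 0 -> exists2 s', s = u ++ s' ++ v & coef f s' != 0.
Proof.
move=> v_size /coef_tens_neq0 [/coef_tens_neq0 [su fs] /(coef_ew_neq0 v_size) sv].
move/(coef_ew_neq0 (erefl _)): su => su.
exists (drop (size u) (take (size u + N) s)) => //.
by rewrite -{1}(cat_take_drop (size u + N) s) -{1}(cat_take_drop (size u) (take _ s)) su sv catA.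
Qed.

Hypothesis R_lc : lc_one R.

Lemma lm_coef1 f p : f \in R -> lm f = Some p -> f p = 1.
Proof. by move=> /R_lc [q [q_lead fq1]] /lm_lmb p_lead; rewrite -(lmb_uniq q_lead p_lead). Qed.

Lemma theta_inv_IR_fixed_normal m l (T : tn m -> tn m) (w : m.-tuple X) :
  theta_inv (tensv m (IR R (m - l)) (fullv : {vspace tn l})) T -> (l <= m)%N ->
  fixed_word T w -> normal_word R (take (m - l) w).
Proof.
move=> [T_red T_ker] l_le w_fixed f p u v f_in lm_f w_eq.
have [_ p_max] := andP (lm_lmb lm_f).
have uv_size : (size u + N + size v)%N = (m - l)%N.
  by have := congr1 size w_eq; rewrite !size_cat !size_tuple; lia.
have v_size : size v = (m - l - N - size u)%N by lia.
pose b := drop (m - l) w; have b_size : size b = l by rewrite size_drop size_tuple subKn.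
have uv_size' : size (u ++ p ++ v) = (m - l)%N by rewrite !size_cat size_tuple -uv_size; lia.
have w_split : val w = (u ++ p ++ v) ++ b by rewrite -w_eq cat_take_drop.
pose e := tens m (sandwich (m - l) u f v) (ew l b).
have Te : T e = 0.
  by apply/T_ker; apply: tens_mem (memvf _); apply: sandwich_mem_IR.
suff : T e != 0 by rewrite Te eqxx.
apply: (redop_lead_neq0 T_red w_fixed).
  rewrite -coef_tuple w_split coef_tens size_cat uv_size' b_size subnK // eqxx.
  rewrite take_size_cat // drop_size_cat // coef_sandwich ?size_tuple //.
  by rewrite coef_tuple (lm_coef1 f_in lm_f) coef_ew // eqxx mulr1 oner_eq0.
move=> w'; rewrite -coef_tuple => /coef_tens_neq0 [].
move=> /(coef_sandwich_neq0 v_size) [s' w'_take fs'] /(coef_ew_neq0 b_size) w'_drop.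
have s'_size : size s' == N by rewrite (coef_size fs').
have w'_split : val w' = (u ++ s' ++ v) ++ b by rewrite -w'_take -w'_drop cat_take_drop.
have := implyP (forallP p_max (Tuple s'_size)); rewrite -coef_tuple fs'.
case/(_ isT)/orP => [/eqP E|s'_lt].
  by left; apply: val_inj; rewrite w'_split w_split -E.
by right; rewrite w'_split w_split -!catA lexlt_catl; apply: lexlt_catr.
Qed.

Lemma imphi_ew A (a : A.-tuple X) : normal_word R a -> imphi R (ew A a).
Proof.
move=> a_nf; exists (ew A a); split; first exact: reach_refl.
by move=> t; rewrite ffunE; case: (val t =P val a) => [-> //|_]; rewrite eqxx.
Qed.

Lemma tensv_full_imphi_decomp A B m (V : {vspace tn B}) (z : tn m) :
  (A + B = m)%N -> z \in tensv m (fullv : {vspace tn A}) V ->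
  supp_in (fun u => normal_word R (take A u)) z ->
  exists s : seq (tn A * tn B),
    (forall p, p \in s -> imphi R p.1 /\ p.2 \in V) /\
    z = \sum_(p <- s) tens m p.1 p.2.
Proof.
move=> AB_m z_in z_supp.
exists [seq (ew A a, slice B z a) | a : A.-tuple X <- index_enum _ & slice B z a != 0].
split; first move=> p /mapP [a].
  rewrite mem_filter => /andP [/slice_neq0 [u u_a /z_supp u_nf] _] -> /=.
  split; last exact: (slice_mem AB_m (size_tuple a) z_in).
  apply: imphi_ew; rewrite -u_a; exact: u_nf.
rewrite big_map big_filter big_mkcond {1}(tens_slice_decomp AB_m z).
apply: eq_bigr => a _; case: eqP => [->|//].
exact: (linmap0 (tens_linr _ _)).
Qed.

End Presentation.

End Words.

Unset Implicit Arguments.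

Lemma lN_le_lNS N n : (0 < N)%N -> (lN N n <= lN N n.+1)%N.
Proof. by move=> N_gt0; rewrite /lN /= uphalf_half; case: (odd n) => /=; lia. Qed.

Theorem lemma4p2p2 (K : fieldType) (disp : Order.disp_t) (X : finOrderType disp)
    (N : nat) (R : seq (tn K X N)) (n : nat) :
  (2 <= N)%N ->
  lc_one R -> reduced R -> side_confluent R ->
  forall (m : nat), (lN N n <= m)%N ->
  forall (F1 F2 : tn K X m -> tn K X m) (k : nat),
    theta_inv (tensv m (IR R (m - lN N n)) (fullv : {vspace tn K X (lN N n)})) F1 ->
    (if (m < lN N n.+1)%N then F2 = id
     else theta_inv (tensv m (fullv : {vspace tn K X (m - lN N n.+1)}) (J R n.+1)) F2) ->
    (forall x, alt k F1 F2 x = alt k F2 F1 x) ->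
    forall x : tn K X m, in_imphi_J R n (left_bound k F1 F2 x).
Proof.
move=> N_ge2 R_lc _ _ m ln_m F1 F2 k F1_theta.
case: ifPn => [_ -> _ x | /negbTE m_ge F2_theta _ x].
  by exists [::]; split => //; rewrite big_nil /left_bound subrr.
have AB_m : (m - lN N n.+1 + lN N n.+1)%N = m by rewrite subnK // leqNgt m_ge.
have [F2_red F2_ker] := F2_theta.
apply: (tensv_full_imphi_decomp AB_m).
  by apply/F2_ker; rewrite (linmapB (redop_linmap F2_red)) redop_idem // subrr.
apply: left_bound_supp; last first.
  exact: (theta_inv_full_prefix_supp AB_m F2_theta (Q := normal_word R)).
have A_le : (m - lN N n.+1 <= m - lN N n)%N by rewrite leq_sub2l // lN_le_lNS // ltnW.
move=> z u /(redop_supp F1_theta.1) /(theta_inv_IR_fixed_normal R_lc F1_theta ln_m).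
by move/(normal_word_take (k := (m - lN N n.+1)%N)); rewrite take_takel.
Qed.
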